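(* For any tensor $\mathcal{A}\in\mathbb{R}^{N_1\times N_2\times N_3}$ with $\mathcal{A}\neq\mathbf{0}$, $\xi(\mathcal{A})\,\mu(\mathcal{A})\ge 1$.
   Context: For $\mathcal{A}\in\mathbb{R}^{N_1\times N_2\times N_3}$ write $A^{(k)}=\mathcal{A}(:,:,k)$ for its frontal slices. $\mathrm{bcirc}(\mathcal{A})\in\mathbb{R}^{N_1N_3\times N_2N_3}$ is the block circulant matrix whose $(i,j)$ block is $A^{(((i-j)\bmod N_3)+1)}$; $\mathrm{unfold}$ stacks the frontal slices vertically, $\mathrm{fold}$ is its inverse, and the t-product is $\mathcal{A}*\mathcal{B}=\mathrm{fold}(\mathrm{bcirc}(\mathcal{A})\,\mathrm{unfold}(\mathcal{B}))$. The transpose $\mathcal{A}^\top$ transposes each frontal slice and reverses the order of slices $2,\dots,N_3$. The identity tensor has first frontal slice the identity and other slices zero; f-diagonal means every frontal slice is diagonal. Every $\mathcal{A}$ of tubal rank $R$ has a skinny t-SVD $\mathcal{A}=\mathcal{U}*\mathcal{S}*\mathcal{V}^\top$ with $\mathcal{U}\in\mathbb{R}^{N_1\times R\times N_3}$, $\mathcal{V}\in\mathbb{R}^{N_2\times R\times N_3}$, $\mathcal{U}^\top*\mathcal{U}=\mathcal{V}^\top*\mathcal{V}=\mathcal{I}$, $\mathcal{S}$ f-diagonal. Tensor spectral norm $\|\mathcal{A}\|=\|\mathrm{bcirc}(\mathcal{A})\|$; $\|\mathcal{A}\|_\infty$ is the maximum absolute entry. $T(\mathcal{A})=\{\mathcal{U}*\mathcal{Y}^\top+\mathcal{W}*\mathcal{V}^\top:\mathcal{Y}\in\mathbb{R}^{N_2\times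 R\times N_3},\mathcal{W}\in\mathbb{R}^{N_1\times R\times N_3}\}$; $\Omega(\mathcal{A})=\{\mathcal{N}:\mathrm{support}(\mathcal{N})\subseteq\mathrm{support}(\mathcal{A})\}$. $\xi(\mathcal{A})=\max_{\mathcal{N}\in T(\mathcal{A}),\|\mathcal{N}\|\le1}\|\mathcal{N}\|_\infty$, $\mu(\mathcal{A})=\max_{\mathcal{N}\in\Omega(\mathcal{A}),\|\mathcal{N}\|_\infty\le1}\|\mathcal{N}\|$. *)

From HB Require Import structures.
From mathcomp Require Import all_boot all_order all_algebra.
From mathcomp Require Import boolp classical_sets reals.
Set Implicit Arguments. Unset Strict Implicit. Unset Printing Implicit Defensive.
Import Order.TTheory GRing.Theory Num.Theory.
Local Open Scope ring_scope.
Local Open Scope classical_set_scope.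

Section Tensors.
Variable R : realType.

(* A tensor in R^{n1 x n2 x n3}, given by its frontal slices A^{(k)}, k : 'I_n3
   (0-based: slice k here is slice k+1 of the paper). *)
Definition tensor (n1 n2 n3 : nat) := {ffun 'I_n3 -> 'M[R]_(n1, n2)}.

Definition mkidx n3 (i : 'I_n3) (m : nat) : 'I_n3 :=
  Ordinal (ltn_pmod m (leq_ltn_trans (leq0n i) (ltn_ord i))).
Definition csub n3 (i j : 'I_n3) : 'I_n3 := mkidx i (i + n3 - j).
Definition cneg n3 (k : 'I_n3) : 'I_n3 := mkidx k (n3 - k).

Definition bcirc n1 n2 n3 (A : tensor n1 n2 n3) :
  'M[R]_(\sum_(i < n3) n1, \sum_(j < n3) n2) :=
  \mxblock_(i < n3, j < n3) A (csub i j).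

Definition unfold n1 n2 n3 (A : tensor n1 n2 n3) : 'M[R]_(\sum_(k < n3) n1, n2) :=
  \mxcol_(k < n3) A k.
Definition fold n1 n2 n3 (M : 'M[R]_(\sum_(k < n3) n1, n2)) : tensor n1 n2 n3 :=
  [ffun k => submxcol M k].

Definition tprod n1 n2 n4 n3 (A : tensor n1 n2 n3) (B : tensor n2 n4 n3) :
  tensor n1 n4 n3 := fold (bcirc A *m unfold B).

(* tensor transpose: transpose each slice and reverse slices 2..n3 *)
Definition ttr n1 n2 n3 (A : tensor n1 n2 n3) : tensor n2 n1 n3 :=
  [ffun k => (A (cneg k))^T].

Definition tid n n3 : tensor n n n3 :=
  [ffun k : 'I_n3 => if val k == 0%N then 1%:M else 0].

Definition fdiag n1 n2 n3 (S : tensor n1 n2 n3) : Prop :=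
  forall k (i : 'I_n1) (j : 'I_n2), (val i != val j) -> S k i j = 0.

Definition is_tubal_rank n1 n2 n3 (A : tensor n1 n2 n3) (r : nat) : Prop :=
  (exists (B : tensor n1 r n3) (C : tensor n2 r n3), A = tprod B (ttr C)) /\
  forall (r' : nat) (B : tensor n1 r' n3) (C : tensor n2 r' n3),
    A = tprod B (ttr C) -> (r <= r')%N.

Definition skinny_tsvd n1 n2 n3 r (A : tensor n1 n2 n3)
  (U : tensor n1 r n3) (S : tensor r r n3) (V : tensor n2 r n3) : Prop :=
  [/\ is_tubal_rank A r,
      A = tprod (tprod U S) (ttr V),
      tprod (ttr U) U = tid r n3,
      tprod (ttr V) V = tid r n3 &
      fdiag S].

Definition vnorm2 n (x : 'cV[R]_n) : R := Num.sqrt (\sum_i x i 0 ^+ 2).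
Definition specnorm m n (M : 'M[R]_(m, n)) : R :=
  sup [set t | exists x : 'cV[R]_n, vnorm2 x <= 1 /\ t = vnorm2 (M *m x)].

Definition tspec n1 n2 n3 (A : tensor n1 n2 n3) : R := specnorm (bcirc A).

Definition tinf n1 n2 n3 (A : tensor n1 n2 n3) : R :=
  \big[Num.max/0]_(k < n3) \big[Num.max/0]_(i < n1) \big[Num.max/0]_(j < n2)
     `|A k i j|.

Definition Tspace n1 n2 n3 r (U : tensor n1 r n3) (V : tensor n2 r n3) :
  set (tensor n1 n2 n3) :=
  [set N : tensor n1 n2 n3 | exists (Y : tensor n2 r n3) (W : tensor n1 r n3),
           N = tprod U (ttr Y) + tprod W (ttr V)].

Definition Omega n1 n2 n3 (A : tensor n1 n2 n3) : set (tensor n1 n2 n3) :=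
  [set N : tensor n1 n2 n3 | forall k i j, A k i j = 0 -> N k i j = 0].

Definition xi n1 n2 n3 r (U : tensor n1 r n3) (V : tensor n2 r n3) : R :=
  sup [set t | exists N, N \in Tspace U V /\ tspec N <= 1 /\ t = tinf N].

Definition mu n1 n2 n3 (A : tensor n1 n2 n3) : R :=
  sup [set t | exists N, N \in Omega A /\ tinf N <= 1 /\ t = tspec N].

End Tensors.

(* Both norms are absolutely homogeneous and every entry of a tensor is an
   entry of its block circulant matrix, so 0 < ||A||_oo <= ||A||.  By the
   t-SVD, A = U * 0^T + (U * S) * V^T lies in T(A), hence so does A / ||A||,
   which gives xi(A) >= ||A||_oo / ||A||.  Trivially A / ||A||_oo lies in
   Omega(A) with maximum entry 1, which gives mu(A) >= ||A|| / ||A||_oo. *)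
From HB Require Import structures.
From mathcomp Require Import all_boot all_order all_algebra.
From mathcomp Require Import boolp classical_sets reals.
Import Order.TTheory GRing.Theory Num.Theory.
Local Open Scope ring_scope.
Set Implicit Arguments. Unset Strict Implicit.
Local Open Scope classical_set_scope.

Section AbsolutelyHomogeneous.
Variables (R : realFieldType) (V : lmodType R) (f : V -> R).
Hypotheses (f_ge0 : forall x, 0 <= f x)
           (f_scale_le : forall c x, f (c *: x) <= `|c| * f x).

Lemma homogeneous_of_scale_le c x : f (c *: x) = `|c| * f x.
Proof.
have [->|c0] := eqVneq c 0.
  have := f_scale_le 0 x; rewrite normr0 !mul0r => f0_le0.
  by apply/eqP; rewrite eq_le f0_le0 f_ge0.
apply/eqP; rewrite eq_le f_scale_le /= -ler_pdivlMl ?normr_gt0 //.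
by rewrite -normrV ?unitfE // -{1}(scalerK c0 x) f_scale_le.
Qed.

End AbsolutelyHomogeneous.

Section SpectralNorm.
Variable R : realType.
Implicit Types (m n : nat).

Lemma vnorm2_ge0 n (x : 'cV[R]_n) : 0 <= vnorm2 x.
Proof. exact: sqrtr_ge0. Qed.

Lemma vnorm20 n : vnorm2 (0 : 'cV[R]_n) = 0.
Proof. by rewrite /vnorm2 big1 ?sqrtr0 // => i _; rewrite mxE expr0n. Qed.

Lemma vnorm2Z n c (x : 'cV[R]_n) : vnorm2 (c *: x) = `|c| * vnorm2 x.
Proof.
rewrite /vnorm2 -sqrtr_sqr -sqrtrM ?sqr_ge0 // mulr_sumr.
by congr Num.sqrt; apply: eq_bigr => i _; rewrite mxE exprMn.
Qed.

Lemma entry_le_vnorm2 n (x : 'cV[R]_n) j : `|x j 0| <= vnorm2 x.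
Proof.
rewrite -sqrtr_sqr ler_wsqrtr // (bigD1 j) //= lerDl.
by apply: sumr_ge0 => i _; apply: sqr_ge0.
Qed.

Lemma vnorm2_mulmx_le m n (M : 'M[R]_(m, n)) x : vnorm2 x <= 1 ->
  vnorm2 (M *m x) <= Num.sqrt (\sum_i (\sum_j `|M i j|) ^+ 2).
Proof.
move=> x_le1; rewrite ler_wsqrtr //; apply: ler_sum => i _.
rewrite -real_normK ?num_real // ler_pXn2r ?nnegrE ?sumr_ge0 // mxE.
apply: le_trans (ler_norm_sum _ _ _) _; apply: ler_sum => j _.
rewrite normrM -[leRHS]mulr1 ler_wpM2l //.
exact: le_trans (entry_le_vnorm2 x j) x_le1.
Qed.

Lemma has_sup_specnorm m n (M : 'M[R]_(m, n)) :
  has_sup [set t | exists x : 'cV[R]_n, vnorm2 x <= 1 /\ t = vnorm2 (M *m x)].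
Proof.
split; first by exists (vnorm2 (M *m 0)), 0; rewrite vnorm20 ler01.
exists (Num.sqrt (\sum_i (\sum_j `|M i j|) ^+ 2)) => _ [x [x_le1 ->]].
exact: vnorm2_mulmx_le.
Qed.

Lemma specnorm_ub m n (M : 'M[R]_(m, n)) x :
  vnorm2 x <= 1 -> vnorm2 (M *m x) <= specnorm M.
Proof. by move=> x_le1; apply: (sup_upper_bound (has_sup_specnorm M)); exists x. Qed.

Lemma specnorm_le m n (M : 'M[R]_(m, n)) b :
  (forall x, vnorm2 x <= 1 -> vnorm2 (M *m x) <= b) -> specnorm M <= b.
Proof.
move=> Mb; apply: ge_sup; first by case: (has_sup_specnorm M).
by move=> _ [x [x_le1 ->]]; apply: Mb.
Qed.

Lemma specnorm_ge0 m n (M : 'M[R]_(m, n)) : 0 <= specnorm M.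
Proof. by apply: le_trans (specnorm_ub M (x := 0) _); rewrite ?vnorm2_ge0 ?vnorm20. Qed.

Lemma specnormZ m n c (M : 'M[R]_(m, n)) :
  specnorm (c *: M) = `|c| * specnorm M.
Proof.
apply: (@homogeneous_of_scale_le _ _ (@specnorm R m n)) => [{}M|{}c {}M].
  exact: specnorm_ge0.
apply: specnorm_le => x x_le1.
by rewrite -scalemxAl vnorm2Z ler_wpM2l // specnorm_ub.
Qed.

Lemma entry_le_specnorm m n (M : 'M[R]_(m, n)) i j : `|M i j| <= specnorm M.
Proof.
pose e : 'cV[R]_n := \col_k (k == j)%:R.
have e_le1 : vnorm2 e <= 1.
  rewrite /vnorm2 (bigD1 j) //= big1 ?addr0 ?mxE ?eqxx ?expr1n ?sqrtr1 //.
  by move=> k /negbTE kj; rewrite mxE kj expr0n.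
apply: le_trans (specnorm_ub M e_le1); apply: le_trans (entry_le_vnorm2 _ i).
rewrite mxE (bigD1 j) //= big1 ?addr0 ?mxE ?eqxx ?mulr1 //.
by move=> k /negbTE kj; rewrite mxE kj mulr0.
Qed.

Lemma specnorm_le_entrywise m n (M : 'M[R]_(m, n)) b :
  (forall i j, `|M i j| <= b) -> specnorm M <= Num.sqrt (m%:R * (n%:R * b) ^+ 2).
Proof.
move=> Mb; apply: specnorm_le => x x_le1.
apply: le_trans (vnorm2_mulmx_le M x_le1) _; rewrite ler_wsqrtr //.
have -> : m%:R * (n%:R * b) ^+ 2 = \sum_(i < m) (\sum_(j < n) b) ^+ 2.
  by rewrite !sumr_const !card_ord !mulr_natl.
apply: ler_sum => i _; rewrite ler_pXn2r ?nnegrE ?sumr_ge0 //.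
- by apply: ler_sum => j _.
- by move=> j _; apply: le_trans (Mb i j).
Qed.

End SpectralNorm.

Section TensorNorms.
Variables (R : realType) (n1 n2 n3 : nat).
Implicit Types A : tensor R n1 n2 n3.

Lemma le_tinf A k i j : `|A k i j| <= tinf A.
Proof.
apply: le_trans (le_bigmax _ _ k); apply: le_trans (le_bigmax _ _ i).
exact: le_bigmax.
Qed.

Lemma tinf_le A b : 0 <= b -> (forall k i j, `|A k i j| <= b) -> tinf A <= b.
Proof.
move=> b_ge0 Ab; apply: bigmax_le => // k _.
by apply: bigmax_le => // i _; apply: bigmax_le.
Qed.

Lemma tinf_ge0 A : 0 <= tinf A.
Proof. exact: bigmax_ge_id. Qed.

Lemma tinf_gt0 A : A != 0 -> 0 < tinf A.
Proof.
apply: contraNT; rewrite -leNgt => tinf_le0; apply/eqP/ffunP => k.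
apply/matrixP => i j; rewrite !ffunE !mxE; apply/eqP.
by rewrite -normr_le0 (le_trans (le_tinf A k i j)).
Qed.

Lemma tscaleE c A k i j : (c *: A) k i j = c * A k i j.
Proof. by rewrite ffunE mxE. Qed.

Lemma tinfZ c A : tinf (c *: A) = `|c| * tinf A.
Proof.
apply: (@homogeneous_of_scale_le _ _ (@tinf R n1 n2 n3)) => [{}A|{}c {}A].
  exact: tinf_ge0.
apply: tinf_le => [|k i j]; first by rewrite mulr_ge0 ?tinf_ge0.
by rewrite tscaleE normrM ler_wpM2l ?le_tinf.
Qed.

Lemma bcircE A s t :
  bcirc A s t =
  A (csub (tagnat.sig1 s) (tagnat.sig1 t)) (tagnat.sig2 s) (tagnat.sig2 t).
Proof. by rewrite mxE. Qed.

Lemma bcircZ c A : bcirc (c *: A) = c *: bcirc A.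
Proof. by apply/matrixP => s t; rewrite mxE tscaleE [RHS]mxE bcircE. Qed.

Lemma tspecZ c A : tspec (c *: A) = `|c| * tspec A.
Proof. by rewrite /tspec bcircZ specnormZ. Qed.

(* Slice k sits in block (k, 0) of bcirc A. *)
Lemma entry_le_tspec A k i j : `|A k i j| <= tspec A.
Proof.
pose k0 : 'I_n3 := Ordinal (leq_ltn_trans (leq0n k) (ltn_ord k)).
suff <- : bcirc A (tagnat.Rank k i) (tagnat.Rank k0 j) = A k i j.
  exact: entry_le_specnorm.
rewrite bcircE !tagnat.Rank1K; congr (A _ _ _); apply: val_inj => /=.
- by rewrite subn0 -{2}(modn_small (ltn_ord k)) modnDr.
- by rewrite tagnat.Rank2K.
- by rewrite tagnat.Rank2K.
Qed.

Lemma tinf_le_tspec A : tinf A <= tspec A.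
Proof.
apply: tinf_le => [|k i j]; last exact: entry_le_tspec.
exact: specnorm_ge0.
Qed.

Lemma tspec_le_entrywise A b : tinf A <= b ->
  tspec A <= Num.sqrt ((\sum_(k < n3) n1)%:R * ((\sum_(k < n3) n2)%:R * b) ^+ 2).
Proof.
move=> Ab; apply: specnorm_le_entrywise => s t.
by rewrite bcircE (le_trans (le_tinf _ _ _ _)).
Qed.

End TensorNorms.

Section Incoherence.
Variables (R : realType) (n1 n2 n3 r : nat).

Lemma tprodZl n4 c (A : tensor R n1 r n3) (B : tensor R r n4 n3) :
  tprod (c *: A) B = c *: tprod A B.
Proof.
apply/ffunP => k; apply/matrixP => i j.
rewrite tscaleE !ffunE !mxE bcircZ mulr_sumr.
by apply: eq_bigr => t _; rewrite mxE mulrA.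
Qed.

Lemma tprod_ttr0 (A : tensor R n1 r n3) :
  tprod A (ttr (0 : tensor R n2 r n3)) = 0.
Proof.
apply/ffunP => k; apply/matrixP => i j; rewrite !ffunE !mxE big1 // => t _.
by rewrite !mxE ffunE mxE ffunE mxE mulr0.
Qed.

Lemma tprod_in_Tspace (U : tensor R n1 r n3) (V : tensor R n2 r n3) W :
  tprod W (ttr V) \in Tspace U V.
Proof. by apply: mem_set; exists 0, W; rewrite tprod_ttr0 add0r. Qed.

Lemma scale_in_Omega (A : tensor R n1 n2 n3) c : c *: A \in Omega A.
Proof. by apply: mem_set => k i j Akij0; rewrite tscaleE Akij0 mulr0. Qed.

Lemma le_xi (U : tensor R n1 r n3) (V : tensor R n2 r n3) N :
  N \in Tspace U V -> tspec N <= 1 -> tinf N <= xi U V.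
Proof.
move=> NT N_le1; apply: sup_upper_bound; last by exists N.
split; first by exists (tinf N), N.
by exists 1 => _ [M [_ [M_le1 ->]]]; apply: le_trans (tinf_le_tspec M) M_le1.
Qed.

Lemma le_mu (A N : tensor R n1 n2 n3) :
  N \in Omega A -> tinf N <= 1 -> tspec N <= mu A.
Proof.
move=> NO N_le1; apply: sup_upper_bound; last by exists N.
split; first by exists (tspec N), N.
exists (Num.sqrt ((\sum_(k < n3) n1)%:R * ((\sum_(k < n3) n2)%:R * 1) ^+ 2)).
by move=> _ [M [_ [M_le1 ->]]]; apply: tspec_le_entrywise.
Qed.

End Incoherence.

Theorem corollary1 (R : realType) (N1 N2 N3 : nat) (A : tensor R N1 N2 N3) :
  A != 0 ->
  forall (r : nat) (U : tensor R N1 r N3) (S : tensor R r r N3)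
         (V : tensor R N2 r N3),
    skinny_tsvd A U S V ->
    1 <= xi U V * mu A.
Proof.
move=> A_neq0 r U S V [_ AE _ _ _].
set m := tinf A; set s := tspec A.
have m_gt0 : 0 < m by apply: tinf_gt0.
have s_gt0 : 0 < s by apply: lt_le_trans m_gt0 (tinf_le_tspec A).
have xi_ge : m / s <= xi U V.
  have AT : s^-1 *: A \in Tspace U V by rewrite AE -tprodZl tprod_in_Tspace.
  apply: le_trans (le_xi AT _).
    by rewrite tinfZ -/m ger0_norm ?invr_ge0 ?(ltW s_gt0) // mulrC.
  by rewrite tspecZ -/s ger0_norm ?invr_ge0 ?(ltW s_gt0) // mulVf ?gt_eqF.
have mu_ge : s / m <= mu A.
  apply: le_trans (le_mu (scale_in_Omega A m^-1) _).
    by rewrite tspecZ -/s ger0_norm ?invr_ge0 ?(ltW m_gt0) // mulrC.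
  by rewrite tinfZ -/m ger0_norm ?invr_ge0 ?(ltW m_gt0) // mulVf ?gt_eqF.
have -> : 1 = m / s * (s / m) by rewrite mulrA divfK ?gt_eqF // divff ?gt_eqF.
by apply: ler_pM => //; rewrite divr_ge0 ?(ltW m_gt0) ?(ltW s_gt0).
Qed.
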